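(* Let $G$ and $H$ be graphs. If $H$ is a subdivision of $G$, then $\mathrm{ecrw}(G)\le 2\,\mathrm{ecrw}(H)$.
   Context: A tree-cut decomposition of a graph $G$ is a pair $\mathcal{T}=(T,\{X_t\}_{t\in V(T)})$ where $T$ is a tree and the bags $X_t\subseteq V(G)$ are pairwise disjoint (possibly empty) with $\bigcup_{t\in V(T)}X_t=V(G)$. For a node $t$ of $T$, let $T_1,\dots,T_m$ be the connected components of $T-t$ and $Z_i=\bigcup_{s\in V(T_i)}X_s$; $\mathrm{cross}_{\mathcal{T}}(t)$ is the number of edges of $G$ whose two endpoints lie in two distinct sets among $Z_1,\dots,Z_m$ (if $T$ has one node, $\mathrm{cross}_{\mathcal T}(t)=0$). The crossing number of $\mathcal{T}$ is $\max_{t}\mathrm{cross}_{\mathcal{T}}(t)$, and the thickness of $\mathcal{T}$ is $\max_t|X_t|$. The edge-crossing width of $\mathcal T$ is the maximum of its crossing number and its thickness, and $\mathrm{ecrw}(G)$ is the minimum edge-crossing width over all tree-cut decompositions of $G$. $H$ is a subdivision of $G$ if $H$ is obtained from $G$ by repeatedly subdividing edges. *)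

From HB Require Import structures.
From mathcomp Require Import all_boot.
From Stdlib Require Import ClassicalEpsilon.
Set Implicit Arguments. Unset Strict Implicit. Unset Printing Implicit Defensive.

Record graph := Graph {
  gV : finType;
  gadj : rel gV;
  gsym : symmetric gadj;
  girr : irreflexive gadj }.

Definition edges (G : graph) : {set {set gV G}} :=
  [set [set p.1; p.2] | p in [set p : gV G * gV G | gadj p.1 p.2]].

(* A tree on node type T with adjacency e: symmetric, irreflexive, nonempty,
   connected, and with exactly |T|-1 (unordered) edges. *)
Definition is_tree (T : finType) (e : rel T) : Prop :=
  [/\ symmetric e, irreflexive e, 0 < #|T|,
      (forall a b, connect e a b) &
      #|[set p : T * T | e p.1 p.2]| = 2 * (#|T| - 1)].

Record tcd (G : graph) := TCD {
  tT : finType;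
  tE : rel tT;
  tE_tree : is_tree tE;
  bag : tT -> {set gV G};
  bag_disj : forall s t, s != t -> [disjoint bag s & bag t];
  bag_cover : forall v, exists t, v \in bag t }.

Definition restr (T : finType) (e : rel T) (t : T) : rel T :=
  fun a b => [&& a != t, b != t & e a b].

(* x and y lie in Z_i, Z_j for two distinct components T_i, T_j of T - t. *)
Definition separated (G : graph) (D : tcd G) (t : tT D) (x y : gV G) : bool :=
  [exists a, exists b,
     [&& x \in @bag G D a, y \in @bag G D b, a != t, b != t
       & ~~ connect (restr (@tE G D) t) a b]].

Definition cross (G : graph) (D : tcd G) (t : tT D) : nat :=
  #|[set e in edges G | [exists x, exists y, (e == [set x; y]) && @separated G D t x y]]|.

Definition ecwidth (G : graph) (D : tcd G) : nat :=
  maxn (\max_(t : tT D) @cross G D t) (\max_(t : tT D) #|@bag G D t|).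

Definition ecrw_le (G : graph) (k : nat) : Prop := exists D : tcd G, ecwidth D <= k.

Definition ecrw_leb (G : graph) (k : nat) : bool :=
  if excluded_middle_informative (ecrw_le G k) then true else false.

Definition trivial_tcd (G : graph) : tcd G.
Proof.
refine (@TCD G unit (fun _ _ => false) _ (fun _ => setT) _ _).
- split => //; first by rewrite card_unit.
  + move=> a b; case: a; case: b; exact: connect0.
  + rewrite card_unit /=; apply/eqP; rewrite cards_eq0; apply/eqP/setP => p.
    by rewrite !inE.
- by move=> [] [].
- by move=> v; exists tt; rewrite inE.
Defined.

Lemma ecrw_exists (G : graph) : exists k, ecrw_leb G k.
Proof.
exists (ecwidth (trivial_tcd G)); rewrite /ecrw_leb.
case: excluded_middle_informative => // [[]].
by exists (trivial_tcd G).
Qed.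

Definition ecrw (G : graph) : nat := ex_minn (ecrw_exists G).

Definition giso (G H : graph) : Prop :=
  exists f : gV G -> gV H, bijective f /\ forall x y, gadj (f x) (f y) = gadj x y.

Definition subdiv1 (G H : graph) : Prop :=
  exists (u v : gV G) (w : gV H) (f : gV G -> gV H),
  [/\ gadj u v, injective f, (forall x, f x != w) &
     [/\
      (forall z, z != w -> exists x, f x = z),
      (forall x y, gadj (f x) (f y) =
                   gadj x y && ~~ (((x == u) && (y == v)) || ((x == v) && (y == u))))
    & (forall z, gadj w z = (z == f u) || (z == f v))]].

Inductive subdivision (G : graph) : graph -> Prop :=
  | subdiv_iso H : giso G H -> subdivision G H
  | subdiv_step H H' : subdivision G H -> subdiv1 H H' -> subdivision G H'.

From mathcomp Require Import all_boot.
From Stdlib Require Import ClassicalEpsilon.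
Set Implicit Arguments. Unset Strict Implicit. Unset Printing Implicit Defensive.

(* 1. A subdivision H of G yields a "topological model" of G in H: an
      injective map f on vertices and, for each edge xy, a route from f x to
      f y in H; a route meets branch vertices only at its ends, and a
      non-branch vertex lies on the route of a single edge.
      The thickness does not grow.  An edge xy of G counted at node t has
      a route whose ends lie in distinct components of T - t, so the route
      either passes through the bag X_t or uses an H-edge counted at t.  By
      internal disjointness of routes these witnesses are distinct for
      distinct edges, whence cross(t) <= cross_D(t) + |X_t| <= 2 width(D).
   3. Applying this to an optimal decomposition of H gives the theorem. *)

Lemma card_le_rel (T U : finType) (S : {set T}) (B : {set U}) (R : T -> U -> bool) :
  (forall s, s \in S -> exists2 u, u \in B & R s u) ->
  (forall s s' u, s \in S -> s' \in S -> R s u -> R s' u -> s = s') ->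
  #|S| <= #|B|.
Proof.
move=> ex inj.
pose g s := [pick u in B | R s u].
have gS s : s \in S -> exists2 u, g s = Some u & (u \in B) && R s u.
  move=> sS; rewrite /g; case: pickP => [u Hu|H]; first by exists u.
  by case: (ex s sS) => u uB Ru; move: (H u); rewrite uB Ru.
have -> : #|S| = #|g @: S|.
  apply/esym/card_in_imset => s s' sS s'S eq.
  case: (gS s sS) => u gu /andP[_ Ru]; case: (gS s' s'S) => u' gu' /andP[_ Ru'].
  by apply: (inj s s' u) => //; move: eq; rewrite gu gu' => -[->].
rewrite -(card_imset B Some_inj); apply: subset_leq_card.
apply/subsetP => o /imsetP[s sS ->].
by case: (gS s sS) => u -> /andP[uB _]; apply/imsetP; exists u.
Qed.

Lemma set2_eq (T : finType) (a b x y : T) :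
  a != b -> a \in [set x; y] -> b \in [set x; y] -> [set a; b] = [set x; y].
Proof.
move=> ab ax bx; apply/eqP; rewrite eqEcard; apply/andP; split.
  apply/subsetP => z; rewrite !inE => /orP[] /eqP ->; [move: ax|move: bx];
  by rewrite !inE.
by rewrite !cards2 ab; case: (x != y).
Qed.

Lemma edge_adj (G : graph) (x y : gV G) : [set x; y] \in edges G -> gadj x y.
Proof.
case/imsetP => p; rewrite inE => Hp E.
have p12 : p.1 != p.2 by apply/eqP => e; move: Hp; rewrite e girr.
have xy : x != y.
  apply/eqP => e; subst y; have := congr1 (fun A : {set gV G} => #|A|) E.
  by rewrite setUid cards1 cards2 p12.
have : x \in [set p.1; p.2] by rewrite -E !inE eqxx.
have : y \in [set p.1; p.2] by rewrite -E !inE eqxx orbT.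
rewrite !inE => /orP[] /eqP ey /orP[] /eqP ex; subst x y => //.
- by rewrite eqxx in xy.
- by rewrite gsym.
- by rewrite eqxx in xy.
Qed.

Lemma bag_uniq (G : graph) (D : tcd G) (a b : tT D) x :
  x \in bag a -> x \in bag b -> a = b.
Proof.
move=> xa xb; apply/eqP; apply/negPn/negP => /bag_disj/disjoint_setI0 E.
have : x \in bag a :&: bag b by rewrite inE xa xb.
by rewrite E inE.
Qed.

Lemma cross_le_ecwidth (G : graph) (D : tcd G) (t : tT D) : cross t <= ecwidth D.
Proof. by apply: leq_trans (leq_maxl _ _); exact: (leq_bigmax t). Qed.

Lemma bag_le_ecwidth (G : graph) (D : tcd G) (t : tT D) : #|bag t| <= ecwidth D.
Proof.
by apply: leq_trans (leq_maxr _ _); exact: (leq_bigmax (F := fun t => #|bag t|) t).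
Qed.

Lemma ecrw_min (G : graph) (D : tcd G) : ecrw G <= ecwidth D.
Proof.
rewrite /ecrw; case: ex_minnP => m _; apply.
by rewrite /ecrw_leb; case: excluded_middle_informative => // [[]]; exists D.
Qed.

Lemma ecrw_attained (G : graph) : exists D : tcd G, ecwidth D <= ecrw G.
Proof.
rewrite /ecrw; case: ex_minnP => m hm _.
by move: hm; rewrite /ecrw_leb; case: excluded_middle_informative.
Qed.

Lemma walk_crosses (H : graph) (D : tcd H) (t : tT D) (a0 : gV H) s (al be : tT D) :
  path (@gadj H) a0 s -> a0 \in bag al -> last a0 s \in bag be -> al != t -> be != t ->
  ~~ connect (restr (@tE H D) t) al be ->
  (exists2 v, v \in a0 :: s & v \in bag t) \/
  exists a b, [/\ a \in a0 :: s, b \in a0 :: s, gadj a b & separated t a b].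
Proof.
elim: s a0 al => [|b s IH] a0 al /=.
  by move=> _ a0al a0be alt bet; rewrite (bag_uniq a0al a0be) connect0.
move=> /andP[ab pb] a0al lbe alt bet nc.
have [ga bga] := bag_cover D b.
have [gat|gat] := eqVneq ga t.
  by left; exists b; rewrite ?inE ?eqxx ?orbT // -gat.
have [C|C] := boolP (connect (restr (@tE H D) t) al ga); last first.
  right; exists a0, b; split; rewrite ?inE ?eqxx ?orbT //.
  by apply/existsP; exists al; apply/existsP; exists ga; rewrite a0al bga alt gat C.
have nc' : ~~ connect (restr (@tE H D) t) ga be.
  by apply: contra nc => C'; exact: connect_trans C C'.
case: (IH b ga pb bga lbe gat bet nc') => [[v vin vt]|[a [b' [ain bin ab' sep]]]].
  by left; exists v => //; rewrite inE vin orbT.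
by right; exists a, b'; split => //; rewrite inE ?ain ?bin orbT.
Qed.

Section TopologicalModel.
Variables (G H : graph) (f : gV G -> gV H) (P : gV G -> gV G -> seq (gV H)).

Definition route (x y : gV G) : seq (gV H) := f x :: P x y.

Definition routes_are_paths : Prop :=
  forall x y, gadj x y -> path (@gadj H) (f x) (P x y) /\ last (f x) (P x y) = f y.

Definition routes_avoid_branches : Prop :=
  forall x y z, gadj x y -> f z \in route x y -> z = x \/ z = y.

Definition routes_internally_disjoint : Prop :=
  forall x y x' y' v, gadj x y -> gadj x' y' -> v \in route x y ->
    v \in route x' y' -> (forall z, f z != v) -> [set x; y] = [set x'; y'].

Definition tmodel : Prop :=
  [/\ injective f, routes_are_paths, routes_avoid_branches
    & routes_internally_disjoint].

Lemma route_share2 :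
  routes_avoid_branches -> routes_internally_disjoint ->
  forall x y x' y' a b, gadj x y -> gadj x' y' -> a != b ->
   a \in route x y -> b \in route x y ->
   a \in route x' y' -> b \in route x' y' -> [set x; y] = [set x'; y'].
Proof.
move=> ends disj x y x' y' a b xy xy' ab a1 b1 a2 b2.
have [/existsP [z1 /eqP ez1]|na] := boolP [exists z, f z == a]; last first.
  apply: (disj _ _ _ _ a) => // z; apply: contraNneq na => e.
  by apply/existsP; exists z; rewrite e.
have [/existsP [z2 /eqP ez2]|nb] := boolP [exists z, f z == b]; last first.
  apply: (disj _ _ _ _ b) => // z; apply: contraNneq nb => e.
  by apply/existsP; exists z; rewrite e.
subst a b.
have z12 : z1 != z2 by apply: contra ab => /eqP ->.
have mem x0 y0 z : gadj x0 y0 -> f z \in route x0 y0 -> z \in [set x0; y0].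
  by move=> h /(ends _ _ _ h) [] ->; rewrite !inE eqxx ?orbT.
by rewrite -(set2_eq z12 (mem _ _ _ xy a1) (mem _ _ _ xy b1))
           (set2_eq z12 (mem _ _ _ xy' a2) (mem _ _ _ xy' b2)).
Qed.

End TopologicalModel.

Lemma tmodel_iso G H : giso G H ->
  exists f P, @tmodel G H f P.
Proof.
case=> f [/bij_inj inj hadj].
exists f, (fun x y => [:: f y]); split => //.
- by move=> x y xy /=; rewrite hadj xy.
- by move=> x y z _; rewrite !inE => /orP[] /eqP /inj ->; [left|right].
- move=> x y x' y' v _ _; rewrite !inE => /orP[] /eqP -> _ h.
  + by have := h x; rewrite eqxx.
  + by have := h y; rewrite eqxx.
Qed.

Section SubdivideWalk.
Variables (H H' : graph) (u v : gV H) (w : gV H') (g : gV H -> gV H').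
Hypotheses (gadj' : forall x y, gadj (g x) (g y) =
                   gadj x y && ~~ (((x == u) && (y == v)) || ((x == v) && (y == u))))
  (wadj : forall z, gadj w z = (z == g u) || (z == g v)).

Definition step_image (a b : gV H) : seq (gV H') :=
  if ((a == u) && (b == v)) || ((a == v) && (b == u)) then [:: w; g b] else [:: g b].

(* The image of the walk a :: s (without its first vertex g a). *)
Definition walk_image a s := flatten (pairmap step_image a s).

Lemma walk_image_cons a b s : walk_image a (b :: s) = step_image a b ++ walk_image b s.
Proof. by []. Qed.

Lemma last_step_image a b x : last x (step_image a b) = g b.
Proof. by rewrite /step_image; case: ifP. Qed.

Lemma walk_image_path a s : path (@gadj H) a s ->
  path (@gadj H') (g a) (walk_image a s) /\
  last (g a) (walk_image a s) = g (last a s).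
Proof.
elim: s a => [|b s IH] a //= /andP[ab /IH [p l]].
rewrite walk_image_cons cat_path last_cat last_step_image p l andbT; split => //.
rewrite /step_image; case: ifP => C /=.
  rewrite gsym !wadj /= andbT.
  by case/orP: C => /andP[/eqP -> /eqP ->]; rewrite !eqxx ?orbT.
by rewrite andbT gadj' ab C.
Qed.

Lemma walk_image_mem a s z : z \in g a :: walk_image a s ->
  (z = w /\ u \in a :: s /\ v \in a :: s) \/ exists2 b, b \in a :: s & z = g b.
Proof.
elim: s a => [|b s IH] a /=.
  by rewrite inE => /eqP ->; right; exists a; rewrite ?inE ?eqxx.
rewrite walk_image_cons inE mem_cat => /orP[/eqP ->|/orP[]].
- by right; exists a; rewrite ?inE ?eqxx.
- rewrite /step_image; case: ifP => C; rewrite !inE; last first.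
    by move=> /eqP ->; right; exists b; rewrite ?inE ?eqxx ?orbT.
  case/orP => [/eqP ->|/eqP ->]; last by right; exists b; rewrite ?inE ?eqxx ?orbT.
  left; split => //.
  by case/orP: C => /andP[/eqP -> /eqP ->]; split; rewrite ?inE ?eqxx ?orbT.
- move=> zin; have : z \in g b :: walk_image b s by rewrite inE zin orbT.
  case/IH => [[-> [h1 h2]]|[c cin ->]].
    by left; split => //; split; rewrite inE ?h1 ?h2 orbT.
  by right; exists c => //; rewrite inE cin orbT.
Qed.

End SubdivideWalk.

Lemma tmodel_subdiv1 G H H' : (exists f P, @tmodel G H f P) -> subdiv1 H H' ->
  exists f P, @tmodel G H' f P.
Proof.
case=> f [P [finj paths ends disj]] [u [v [w [g [uv ginj gw [_ gadj' wadj]]]]]].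
have mem_image x y z := @walk_image_mem H H' u v w g (f x) (P x y) z.
exists (g \o f), (fun x y => walk_image u v w g (f x) (P x y)); split.
- exact: inj_comp.
- move=> x y xy; case: (paths x y xy) => p l.
  by case: (walk_image_path gadj' wadj p) => p' l'; split => //=; rewrite l' l.
- move=> x y z xy /mem_image [[/= e _]|[b bin /ginj e]].
    by move: (gw (f z)); rewrite e eqxx.
  by apply: (ends x y z xy); rewrite /route e.
- move=> x y x' y' z xy xy' /mem_image h1 /mem_image h2 nz.
  have [zw|zw] := eqVneq z w.
    case: h1 => [[_ [u1 v1]]|[b _ e]]; last by move: (gw b); rewrite -e zw eqxx.
    case: h2 => [[_ [u2 v2]]|[b _ e]]; last by move: (gw b); rewrite -e zw eqxx.
    have uv' : u != v by apply/eqP => e; move: uv; rewrite e girr.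
    exact: (route_share2 ends disj xy xy' uv' u1 v1 u2 v2).
  case: h1 => [[e _]|[b bin e1]]; first by rewrite e eqxx in zw.
  case: h2 => [[e _]|[b' bin' e2]]; first by rewrite e eqxx in zw.
  subst z; move/ginj: e2 => e2; subst b'.
  apply: (disj _ _ _ _ b) => // z0; apply/eqP => e; move: (nz z0) => /=.
  by rewrite e eqxx.
Qed.

Lemma tmodel_subdivision G H : subdivision G H -> exists f P, @tmodel G H f P.
Proof.
elim => [H0 /tmodel_iso //|H0 H1 _ IH s]; exact: tmodel_subdiv1 IH s.
Qed.

Definition pull (G H : graph) (f : gV G -> gV H) (D : tcd H) : tcd G.
Proof.
refine (@TCD G (tT D) (@tE H D) (tE_tree D) (fun t => f @^-1: bag t) _ _).
- move=> s t st; rewrite -setI_eq0; apply/eqP/setP => x; rewrite !inE.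
  by apply/andP => -[h1 h2]; move: st; rewrite (bag_uniq h1 h2) eqxx.
- by move=> x; case: (bag_cover D (f x)) => t ht; exists t; rewrite inE.
Defined.

Section PullBack.
Variables (G H : graph) (f : gV G -> gV H) (P : gV G -> gV G -> seq (gV H)).
Hypotheses (finj : injective f) (paths : routes_are_paths f P)
  (ends : routes_avoid_branches f P) (disj : routes_internally_disjoint f P).
Variables (D : tcd H) (t : tT D).

Lemma card_pull_bag : #|@bag G (pull f D) t| <= #|bag t|.
Proof.
rewrite -(card_imset _ finj); apply: subset_leq_card; apply/subsetP => z.
by case/imsetP => x; rewrite inE => hx ->.
Qed.

Definition cross_edges : {set {set gV H}} :=
  [set e in edges H | [exists x, exists y, (e == [set x; y]) && separated t x y]].

(* Possible witnesses for an edge of G counted at t: an H-edge counted at t,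
   or a vertex of X_t. *)
Definition witnesses : {set {set gV H} + gV H} :=
  [set inl E | E in cross_edges] :|: [set inr z | z in bag t].

Lemma card_witnesses : #|witnesses| <= cross t + #|bag t|.
Proof. by rewrite cardsU !card_imset ?leq_subr //; [exact: inr_inj|exact: inl_inj]. Qed.

Definition witness_of (x y : gV G) (wt : {set gV H} + gV H) : bool :=
  match wt with
  | inl E => [exists a, exists b, [&& a \in route f P x y, b \in route f P x y,
                 gadj a b, separated t a b & E == [set a; b]]]
  | inr z => (z \in route f P x y) && (z \in bag t)
  end.

Lemma witness_exists x y : gadj x y -> @separated G (pull f D) t x y ->
  exists2 wt, wt \in witnesses & witness_of x y wt.
Proof.
move=> xy /existsP[al /existsP[be /and5P[xal ybe alt bet nc]]].
rewrite inE in xal; rewrite inE in ybe.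
have [p l] := paths xy; rewrite -l in ybe.
case: (walk_crosses p xal ybe alt bet nc) => [[z zin zt]|[a [b [ain bin ab sab]]]].
  by exists (inr z); rewrite /= ?zin ?zt // inE; apply/orP; right; apply/imsetP; exists z.
exists (inl [set a; b]); last first.
  by apply/existsP; exists a; apply/existsP; exists b; rewrite ain bin ab sab eqxx.
rewrite inE; apply/orP; left; apply/imsetP; exists [set a; b] => //.
rewrite inE; apply/andP; split; first by apply/imsetP; exists (a, b); rewrite ?inE.
by apply/existsP; exists a; apply/existsP; exists b; rewrite eqxx sab.
Qed.

(* A vertex of X_t on the route of an edge counted at t is not a branch
   vertex: the branch vertices of that route lie in bags other than X_t. *)
Lemma bag_vertex_internal x y z : gadj x y -> @separated G (pull f D) t x y ->
  z \in route f P x y -> z \in bag t -> forall z0, f z0 != z.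
Proof.
move=> xy /existsP[al /existsP[be /and5P[xal ybe alt bet _]]] zin zt z0.
rewrite inE in xal; rewrite inE in ybe.
apply/eqP => ez; subst z.
case: (ends xy zin) => e0; subst z0.
  by move: alt; rewrite (bag_uniq xal zt) eqxx.
by move: bet; rewrite (bag_uniq ybe zt) eqxx.
Qed.

Lemma witness_unique x y x' y' wt : gadj x y -> gadj x' y' ->
  @separated G (pull f D) t x y ->
  witness_of x y wt -> witness_of x' y' wt -> [set x; y] = [set x'; y'].
Proof.
move=> xy xy' sep; case: wt => [E|z] /=; last first.
  move=> /andP[z1 zt] /andP[z2 _].
  exact: (disj xy xy' z1 z2 (bag_vertex_internal xy sep z1 zt)).
move=> /existsP[a /existsP[b /and5P[a1 b1 ab _ /eqP EE]]].
move=> /existsP[a' /existsP[b' /and5P[a2 b2 _ _ /eqP EE']]].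
have ab' : a != b by apply/eqP => eab; move: ab; rewrite eab girr.
have : a \in [set a'; b'] by rewrite -EE' EE !inE eqxx.
have : b \in [set a'; b'] by rewrite -EE' EE !inE eqxx orbT.
rewrite !inE => bin ain.
have a3 : a \in route f P x' y' by case/orP: ain => /eqP ->.
have b3 : b \in route f P x' y' by case/orP: bin => /eqP ->.
exact: (route_share2 ends disj xy xy' ab' a1 b1 a3 b3).
Qed.

Lemma cross_pull : @cross G (pull f D) t <= cross t + #|bag t|.
Proof.
apply: leq_trans card_witnesses.
pose R (e : {set gV G}) wt := [exists x, exists y, [&& gadj x y,
   @separated G (pull f D) t x y, e == [set x; y] & witness_of x y wt]].
apply: (@card_le_rel _ _ _ _ R).
- move=> e; rewrite inE => /andP[eE /existsP[x /existsP[y /andP[/eqP ee sep]]]].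
  have xy : gadj x y by apply: edge_adj; rewrite -ee.
  have [wt wtW wtxy] := witness_exists xy sep.
  by exists wt => //; apply/existsP; exists x; apply/existsP; exists y; rewrite xy sep ee eqxx.
- move=> e e' wt _ _ /existsP[x /existsP[y /and4P[xy sep /eqP -> W]]]
    /existsP[x' /existsP[y' /and4P[xy' _ /eqP -> W']]].
  exact: witness_unique sep W W'.
Qed.

End PullBack.

Lemma ecwidth_pull (G H : graph) f P (D : tcd H) : @tmodel G H f P ->
  ecwidth (pull f D) <= 2 * ecwidth D.
Proof.
case=> finj paths ends disj; rewrite [ecwidth (pull f D)]/ecwidth geq_max.
rewrite mul2n -addnn; apply/andP; split; apply/bigmax_leqP => t _.
- apply: leq_trans (cross_pull (D:=D) paths ends disj t) _.
  by rewrite leq_add ?cross_le_ecwidth ?bag_le_ecwidth.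
- apply: leq_trans (card_pull_bag (D:=D) finj t) _.
  exact: leq_trans (bag_le_ecwidth (D:=D) t) (leq_addl _ _).
Qed.

Theorem lemma3p13 (G H : graph) :
  subdivision G H -> ecrw G <= 2 * ecrw H.
Proof.
move=> /tmodel_subdivision [f [P M]].
have [D hD] := ecrw_attained H.
apply: leq_trans (ecrw_min (pull f D)) _.
by apply: leq_trans (ecwidth_pull D M) _; rewrite leq_mul2l hD orbT.
Qed.
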